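(* For every integer $n\geq 3$, the cycle $C_n$ on $n$ vertices satisfies $\operatorname{th}_{\operatorname{H}}(C_n)=\lceil 2\sqrt{n-2}+1\rceil$.
   Context: All graphs are finite, simple and undirected. Hopping color change rule: a blue vertex $v$ may force a white vertex $w$ to become blue if $v$ has not previously performed a force and every neighbor of $v$ is blue. For an initial blue set $B$, a chronological list of forces of $B$ is a sequence of such forces applied one at a time until no further force is possible; its underlying unordered set is a set of forces of $B$. $B$ is a hopping forcing set if some chronological list of forces of $B$ turns all vertices blue. For a set of forces $\mathcal F$ of $B$, let $\mathcal F^{(0)}=B$ and for $t\geq1$ let $\mathcal F^{(t)}$ be the set of vertices $w\notin U_{t-1}:=\bigcup_{i=0}^{t-1}\mathcal F^{(i)}$ for which there is $(v\to w)\in\mathcal F$ with $v\in U_{t-1}$ and all neighbors of $v$ in $U_{t-1}$. $\operatorname{pt}_{\operatorname{H}}(G;\mathcal F)$ is the least $t$ with $\bigcup_{i=0}^t\mathcal F^{(i)}=V(G)$ ($\infty$ if none); $\operatorname{pt}_{\operatorname{H}}(G;B)$ is the minimum of $\operatorname{pt}_{\operatorname{H}}(G;\mathcal F)$ over sets of forces $\mathcal F$ of $B$ ($\infty$ if $B$ is not a hopping forcing set). $\operatorname{th}_{\operatorname{H}}(G)=\min_{B\subseteq V(G)}\big(|B|+\operatorname{pt}_{\operatorname{H}}(G;B)\big)$. *)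

From Stdlib Require Import Reals.
From mathcomp Require Import all_boot.
Set Implicit Arguments.
Unset Strict Implicit.
Unset Printing Implicit Defensive.

Definition simple_graph (T : finType) (e : rel T) : Prop :=
  symmetric e /\ irreflexive e.

Definition cycle_adj (n : nat) : rel 'I_n :=
  fun i j => (val j == i.+1 %% n) || (val i == j.+1 %% n).
Arguments cycle_adj n : clear implicits.

Section Hopping.
Variables (T : finType) (e : rel T).

(* With current blue set [blue] and set [used] of vertices that already
   performed a force, v may force w under the hopping rule. *)
Definition can_force (blue used : {set T}) (v w : T) : bool :=
  [&& v \in blue, v \notin used, w \notin blue &
      [forall u, e v u ==> (u \in blue)]].

Fixpoint chron_from (blue used : {set T}) (s : seq (T * T)) : bool :=
  match s with
  | [::] => [forall v, forall w, ~~ can_force blue used v w]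
  | (v, w) :: s' => can_force blue used v w && chron_from (w |: blue) (v |: used) s'
  end.

Definition chronological_list (B : {set T}) (s : seq (T * T)) : bool :=
  chron_from B set0 s.

Definition set_of_forces (B : {set T}) (F : {set T * T}) : Prop :=
  exists s, chronological_list B s /\ F = [set x in s].

Fixpoint Uset (B : {set T}) (F : {set T * T}) (t : nat) : {set T} :=
  match t with
  | 0 => B
  | t'.+1 =>
      let U := Uset B F t' in
      U :|: [set w | (w \notin U) &&
                     [exists v, [&& (v, w) \in F, v \in U &
                                    [forall u, e v u ==> (u \in U)]]]]
  end.

Definition ptH_F (B : {set T}) (F : {set T * T}) (p : nat) : Prop :=
  Uset B F p = setT /\ forall t, Uset B F t = setT -> p <= t.

Definition ptH_B (B : {set T}) (p : nat) : Prop :=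
  (exists F, set_of_forces B F /\ ptH_F B F p) /\
  (forall F q, set_of_forces B F -> ptH_F B F q -> p <= q).

Definition thH (m : nat) : Prop :=
  (exists B p, ptH_B B p /\ m = #|B| + p) /\
  (forall B p, ptH_B B p -> m <= #|B| + p).

End Hopping.

Definition is_ceil_nat (x : R) (m : nat) : Prop :=
  Rlt (Rminus (INR m) 1) x /\ Rle x (INR m).

Definition cycle_bound (n : nat) : R :=
  Rplus (Rmult 2 (sqrt (INR (n - 2)))) 1.

From Stdlib Require Import Reals Lra Psatz.
From mathcomp Require Import all_boot zify.

Set Implicit Arguments.
Unset Strict Implicit.
Unset Printing Implicit Defensive.

(* Let U_t be the set of vertices blue by time t.  Every vertex of U_(t+1) is in B or
   was forced by a vertex whose closed neighbourhood lies in U_t, and each vertex forces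
   at most once; on a cycle, at most |U| - 2 vertices of a proper subset U have all
   their neighbours in U.  Hence |U_(t+1)| <= |B| + |U_t| - 2, so n <= b + t (b - 2) with
   b = |B|, and AM-GM turns this into b + t >= 2 sqrt(n - 2) + 1.  Conversely, start
   from b consecutive blue vertices and let v+1 force v+b: the b - 2 inner vertices of
   the blue arc hop ahead at every step, so b + t (b - 2) vertices are blue at time t,
   and b = floor((m - 1) / 2) + 2 meets the bound. *)

Section HoppingForcing.
Variables (T : finType) (e : rel T).
Implicit Types (U V I B : {set T}) (F : {set T * T}).

Definition graph_interior (U : {set T}) : {set T} :=
  [set v in U | [forall u, e v u ==> (u \in U)]].

Definition functional (F : {set T * T}) : Prop :=
  forall v w w', (v, w) \in F -> (v, w') \in F -> w = w'.

Definition targets (F : {set T * T}) (I : {set T}) : {set T} :=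
  [set w | [exists v in I, (v, w) \in F]].

Lemma graph_interior_sub U : graph_interior U \subset U.
Proof. by apply/subsetP => v; rewrite inE => /andP[]. Qed.

Lemma graph_interior_adj U v u : v \in graph_interior U -> e v u -> u \in U.
Proof. by rewrite inE => /andP[_ /forallP nbU] vu; move/implyP: (nbU u); apply. Qed.

Lemma graph_interiorS U V : U \subset V -> graph_interior U \subset graph_interior V.
Proof.
move=> /subsetP UV; apply/subsetP => v; rewrite !inE => /andP[vU /forallP nbU].
rewrite UV //=; apply/forallP => u; apply/implyP => vu.
by apply: UV; move/implyP: (nbU u); apply.
Qed.

Lemma chron_from_fresh blue used s :
  chron_from e blue used s -> forall x, x \in s -> x.1 \notin used.
Proof.
elim: s blue used => [|[v w] s IH] blue used //= /andP[/and4P[_ vused _ _] rest].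
move=> x; rewrite inE => /orP[/eqP -> //|xs].
by have := IH _ _ rest x xs; rewrite inE negb_or => /andP[].
Qed.

Lemma chron_from_functional blue used s :
  chron_from e blue used s -> functional [set x in s].
Proof.
elim: s blue used => [_ _ _ v w w'|[v0 w0] s IH blue used]; first by rewrite inE.
case/andP=> _ rest v w w'.
have fresh w1 : (v0, w1) \notin s.
  by apply/negP => /(chron_from_fresh rest); rewrite /= !inE eqxx.
rewrite !inE => /orP[/eqP vw|vws] /orP[/eqP vw'|vw's].
- by move: vw vw' => [_ ->] [_ ->].
- by case: vw vw's => -> _; rewrite (negbTE (fresh w')).
- by case: vw' vws => -> _; rewrite (negbTE (fresh w)).
- by have := IH _ _ rest v w w'; rewrite !inE; apply.
Qed.

Lemma set_of_forces_functional B F : set_of_forces e B F -> functional F.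
Proof. by case=> s [chron ->]; apply: chron_from_functional chron. Qed.

Lemma card_targets F I : functional F -> #|targets F I| <= #|I|.
Proof.
move=> Ffun; pose f v := odflt v [pick w | (v, w) \in F].
apply: leq_trans (leq_imset_card f I); apply/subset_leq_card/subsetP => w.
rewrite inE => /exists_inP[v vI vw]; apply/imsetP; exists v => //.
by rewrite /f; case: pickP => [w' vw'|/(_ w)]; [apply: Ffun vw vw' | rewrite vw].
Qed.

Lemma Uset_subS B F t : Uset e B F t \subset Uset e B F t.+1.
Proof. exact: subsetUl. Qed.

Lemma UsetS_sub B F t :
  Uset e B F t.+1 \subset B :|: targets F (graph_interior (Uset e B F t)).
Proof.
have step t' : targets F (graph_interior (Uset e B F t')) \subset
               targets F (graph_interior (Uset e B F t'.+1)).
  apply/subsetP => w; rewrite !inE => /exists_inP[v vI vw].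
  apply/exists_inP; exists v => //.
  by apply: subsetP vI; apply/graph_interiorS/Uset_subS.
have new t' : Uset e B F t'.+1 \subset
              Uset e B F t' :|: targets F (graph_interior (Uset e B F t')).
  apply/subsetP => w; rewrite inE => /orP[wU|]; first by rewrite inE wU.
  rewrite !inE => /andP[_ /existsP[v /and3P[vw vU nbU]]]; apply/orP; right.
  by apply/exists_inP; exists v; rewrite // inE vU.
elim: t => [|t IH]; first exact: new.
apply: subset_trans (new _) _; rewrite subUset subsetUr andbT.
exact: subset_trans IH (setUS _ (step t)).
Qed.

Lemma card_UsetS B F t : functional F ->
  #|Uset e B F t.+1| <= #|B| + #|graph_interior (Uset e B F t)|.
Proof.
move=> Ffun; apply: leq_trans (subset_leq_card (UsetS_sub B F t)) _.
by apply: leq_trans (leq_card_setU _ _) _; rewrite leq_add2l card_targets.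
Qed.

Lemma thH_of_bounds m :
  (forall B F t, set_of_forces e B F -> Uset e B F t = setT -> m <= #|B| + t) ->
  (exists B F t, [/\ set_of_forces e B F, Uset e B F t = setT & #|B| + t <= m]) ->
  thH e m.
Proof.
move=> lower [B [F [t [forces full le_m]]]].
have minimal F' t' : set_of_forces e B F' -> Uset e B F' t' = setT -> t <= t'.
  by move=> forces' full'; rewrite -(leq_add2l #|B|) (leq_trans le_m) ?(lower _ F').
split.
- exists B, t; split; last by apply/eqP; rewrite eqn_leq le_m (lower _ F).
  split; first by exists F; split=> //; split=> // t' full'; exact: minimal full'.
  by move=> F' q forces' [full' _]; apply: minimal full'.
- by move=> B' p [[F' [forces' [full' _]]] _]; exact: lower forces' full'.
Qed.

End HoppingForcing.

Section Cycle.
Variable n : nat.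
Implicit Types (S U : {set 'I_n}) (v u : 'I_n).

Lemma cycle_adjE v u : cycle_adj n v u = (u == ordS v) || (u == ord_pred v).
Proof.
by rewrite -(can2_eq (@ordSK n) (@ord_predK n)) [ordS u == v]eq_sym.
Qed.

Lemma val_iter_ordS k v : val (iter k (@ordS n) v) = (v + k) %% n.
Proof.
elim: k => [|k IH]; first by rewrite addn0 modn_small.
by rewrite iterS /= IH -addn1 modnDml addn1 addnS.
Qed.

Lemma ordS_closed_setT S x : x \in S -> {in S, forall v, ordS v \in S} -> S = setT.
Proof.
move=> xS closedS; apply/setP => y; rewrite inE.
have -> : y = iter (y + n - x) (@ordS n) x.
  apply: val_inj; rewrite val_iter_ordS.
  have -> : x + (y + n - x) = y + n by have := ltn_ord x; lia.
  by rewrite modnDr modn_small.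
by elim: (y + n - x) => //= k; apply: closedS.
Qed.

Lemma ordS_exit S x y : x \in S -> y \notin S -> exists2 v, v \in S & ordS v \notin S.
Proof.
move=> xS yS.
suff /exists_inP[v vS vSS] : [exists v in S, ordS v \notin S] by exists v.
apply: contraR yS => /exists_inPn closedS.
by rewrite (ordS_closed_setT xS) ?inE // => v /closedS /negPn.
Qed.

Lemma ord_pred_exit S x y : x \in S -> y \notin S ->
  exists2 v, v \in S & ord_pred v \notin S.
Proof.
move=> xS yS; have [u uS uSS] : exists2 u, u \in ~: S & ordS u \notin ~: S.
  by apply: (ordS_exit (x := y) (y := x)); rewrite inE ?negbK.
by exists (ordS u); rewrite ?ordSK; move: uS uSS; rewrite !inE ?negbK.
Qed.

Lemma cycle_adj_ordS v : cycle_adj n v (ordS v).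
Proof. by rewrite cycle_adjE eqxx. Qed.

Lemma cycle_adj_ord_pred v : cycle_adj n v (ord_pred v).
Proof. by rewrite cycle_adjE eqxx orbT. Qed.

Lemma card_cycle_interior U :
  U != setT -> #|graph_interior (cycle_adj n) U| <= #|U| - 2.
Proof.
move=> UT; have /subsetPn[y _ yU] : ~~ (setT \subset U) by rewrite subTset.
set I := graph_interior _ U.
case: (set_0Vmem I) => [-> | [x xI]]; first by rewrite cards0.
have xU := subsetP (graph_interior_sub _ _) x xI.
suff : 1 < #|U :\: I|.
  by rewrite cardsD (setIidPr (graph_interior_sub _ _)); move: #|U| #|I| => a b; lia.
have boundary : forall v u, v \in U -> cycle_adj n v u -> u \notin U -> v \in U :\: I.
  move=> v u vU vu; rewrite inE vU andbT.
  by apply: contra => /graph_interior_adj; apply.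
have [v vU vSU] := ordS_exit xU yU; have [w wU wPU] := ord_pred_exit xU yU.
apply/card_gt1P; case: (eqVneq v w) wPU => [<- vPU | vw wPU].
- (* v is isolated in U, so a right exit of U :\ v is a second boundary vertex. *)
  have xv : x != v.
    apply: contraTneq vSU => <-.
    by rewrite negbK (graph_interior_adj xI) ?cycle_adj_ordS.
  have xUv : x \in U :\ v by rewrite !inE xv.
  have yUv : y \notin U :\ v by rewrite !inE negb_and yU orbT.
  have [v' v'U v'SU] := ordS_exit xUv yUv.
  move: v'U; rewrite !inE => /andP[v'v v'U].
  have v'SnU : ordS v' \notin U.
    apply: contra v'SU => v'SU; rewrite !inE v'SU andbT.
    by apply: contraNneq vPU => <-; rewrite ordSK.
  by exists v', v; split=> //; [exact: boundary v'U (cycle_adj_ordS v') v'SnU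
                              | exact: boundary vU (cycle_adj_ordS v) vSU].
- by exists v, w; split=> //; [exact: boundary vU (cycle_adj_ordS v) vSU
                              | exact: boundary wU (cycle_adj_ord_pred w) wPU].
Qed.

Lemma cycle_adj_inner v u : 0 < v -> v.+1 < n -> cycle_adj n v u ->
  u = v.+1 :> nat \/ u = v.-1 :> nat.
Proof.
move=> v_gt0 vSn; rewrite cycle_adjE => /orP[] /eqP ->; [left | right] => /=.
  by rewrite modn_small.
have -> : (v + n).-1 = v.-1 + n by lia.
by rewrite modnDr modn_small //; lia.
Qed.

Lemma cycle_nbhd_sub (A : {set 'I_n}) v k :
  0 < v -> v.+1 < n -> v < k -> (forall u : 'I_n, u <= k -> u \in A) ->
  [forall u, cycle_adj n v u ==> (u \in A)].
Proof.
move=> v_gt0 vSn vk Ak; apply/forallP => u; apply/implyP.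
by case/(cycle_adj_inner v_gt0 vSn) => uv; apply: Ak; lia.
Qed.

End Cycle.

Lemma card_Uset_cycle n (B : {set 'I_n}) (F : {set 'I_n * 'I_n}) t :
  functional F -> #|Uset (cycle_adj n) B F t| <= #|B| + t * (#|B| - 2).
Proof.
move=> Ffun; elim: t => [|t IH]; first by rewrite addn0.
rewrite mulSn; have [full|notfull] := eqVneq (Uset (cycle_adj n) B F t) setT.
  have -> : Uset (cycle_adj n) B F t.+1 = Uset (cycle_adj n) B F t.
    by apply/eqP; rewrite eqEsubset Uset_subS full subsetT.
  by move: IH; rewrite full; move: #|B| (t * _) => b c; lia.
have := card_UsetS (cycle_adj n) B t Ffun; have := card_cycle_interior notfull.
move: IH; move: #|B| (t * _) #|Uset _ _ _ t| #|Uset _ _ _ t.+1| #|graph_interior _ _|.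
by move=> b c u u' i; lia.
Qed.

Lemma card_ord_lt N b : b <= N -> #|[set x : 'I_N | x < b]| = b.
Proof.
move=> bN; have widen_inj : injective (widen_ord bN).
  by move=> i j /(congr1 val) /= /val_inj.
suff -> : [set x : 'I_N | x < b] = widen_ord bN @: [set: 'I_b].
  by rewrite card_imset // cardsT card_ord.
apply/setP => x; rewrite inE.
apply/idP/imsetP => [xb | [i _ ->]]; last exact: (ltn_ord i).
by exists (Ordinal xb); rewrite ?inE //; apply: val_inj.
Qed.

Section ShiftForcing.
Variables n b : nat.
Hypotheses (b_ge3 : 3 <= b) (b_le : b <= n.+1).

Definition shift_forces : seq ('I_n.+1 * 'I_n.+1) :=
  [seq (inord v.+1, inord (v + b)) | v <- iota 0 (n.+1 - b)].

Lemma chron_from_shift r j : r + j = n.+1 - b ->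
  chron_from (cycle_adj n.+1)
    [set x : 'I_n.+1 | x < b + j] [set x : 'I_n.+1 | 0 < x <= j]
    [seq (inord v.+1, inord (v + b)) | v <- iota j r].
Proof.
elim: r j => [|r IH] j /= rj.
  apply/forallP => v; apply/forallP => w; rewrite /can_force !inE.
  by have := ltn_ord w; case: ltnP; rewrite ?andbF //; lia.
apply/andP; split.
  rewrite /can_force !inE !inordK; try lia.
  apply/and4P; split; try lia.
  apply: (cycle_nbhd_sub (k := (b + j).-1)); rewrite ?inordK; try lia.
  by move=> u; rewrite inE; lia.
have blueS :
    inord (j + b) |: [set x : 'I_n.+1 | x < b + j] = [set x : 'I_n.+1 | x < b + j.+1].
  by apply/setP => x; rewrite !inE -val_eqE /= inordK; lia.
have usedS :
    inord j.+1 |: [set x : 'I_n.+1 | 0 < x <= j] = [set x : 'I_n.+1 | 0 < x <= j.+1].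
  by apply/setP => x; rewrite !inE -val_eqE /= inordK; lia.
by rewrite blueS usedS; apply: IH; lia.
Qed.

Lemma chronological_shift :
  chronological_list (cycle_adj n.+1) [set x : 'I_n.+1 | x < b] shift_forces.
Proof.
have := @chron_from_shift (n.+1 - b) 0 (addn0 _).
have -> : [set x : 'I_n.+1 | 0 < x <= 0] = set0 by apply/setP => x; rewrite !inE; lia.
by rewrite addn0.
Qed.

Lemma Uset_shift t (x : 'I_n.+1) : x < b + t * (b - 2) ->
  x \in Uset (cycle_adj n.+1) [set x : 'I_n.+1 | x < b] [set f in shift_forces] t.
Proof.
elim: t x => [|t IH] x; first by rewrite mul0n addn0 inE.
rewrite mulSn /= inE => x_lt; case xU: (x \in Uset _ _ _ t) => //=.
have x_ge : b + t * (b - 2) <= x by rewrite leqNgt; apply: contraFN xU; apply: IH.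
have x_lt_n := ltn_ord x.
rewrite inE xU /=.
have -> : x = inord (x - b + b) :> 'I_n.+1 by apply: val_inj; rewrite /= inordK; lia.
apply/existsP; exists (inord (x - b).+1).
apply/and3P; split.
- by rewrite inE; apply: map_f; rewrite mem_iota; lia.
- by apply: IH; rewrite inordK; lia.
- apply: (cycle_nbhd_sub (k := (x - b).+2)); rewrite ?inordK; try lia.
  by move=> u u_le; apply: IH; lia.
Qed.

End ShiftForcing.

Lemma cycle_shift_forcing n b p : 3 <= b -> b <= n -> n <= b + p * (b - 2) ->
  exists B F, [/\ set_of_forces (cycle_adj n) B F,
                  Uset (cycle_adj n) B F p = setT & #|B| = b].
Proof.
case: n => [|n] b_ge3 b_le covers; first by lia.
exists [set x : 'I_n.+1 | x < b], [set f in shift_forces n b]; split.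
- by exists (shift_forces n b); split; first exact: chronological_shift.
- by apply/setP => x; rewrite inE Uset_shift //; have := ltn_ord x; lia.
- exact: card_ord_lt.
Qed.

Lemma ceil_cycle_bound n m : 3 <= n -> is_ceil_nat (cycle_bound n) m ->
  [/\ 3 <= m, 4 * (n - 2) <= (m - 1) ^ 2 & (m - 2) ^ 2 < 4 * (n - 2)].
Proof.
rewrite /is_ceil_nat /cycle_bound => n_ge3 [m_gt m_ge].
set a := INR (n - 2) in m_gt m_ge *.
have a_ge1 : Rle 1 a by apply: (le_INR 1); apply/leP; lia.
have s_sq := sqrt_sqrt a ltac:(lra).
have s_ge1 : Rle 1 (sqrt a) by rewrite -sqrt_1; apply: sqrt_le_1_alt.
have m_ge3 : 3 <= m by apply/leP/INR_le; rewrite !S_INR /=; lra.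
case: m m_ge3 m_gt m_ge => [|[|[|k]]] // _; rewrite !subSS subn0 !S_INR => m_gt m_ge.
split=> //; [apply/leP/INR_le | apply/ltP/INR_lt]; rewrite !mult_INR !S_INR /= -/a; nra.
Qed.

Lemma leq_budget_of_cover n m b t : 3 <= n -> (m - 2) ^ 2 < 4 * (n - 2) ->
  n <= b + t * (b - 2) -> m <= b + t.
Proof.
move=> n_ge3 m_lt; case: b => [|[|c]]; rewrite ?mul0n ?muln0; try lia.
rewrite !subSS subn0 => n_le.
have agm : 4 * (t.+1 * c) <= (t.+1 + c) ^ 2 := nat_AGM2 t.+1 c.
have : (m - 2) ^ 2 < (t.+1 + c) ^ 2 by apply: leq_trans agm; rewrite mulSn; nia.
by rewrite ltn_sqr; lia.
Qed.

Lemma exists_tight_cover n m : 3 <= m -> 4 * (n - 2) <= (m - 1) ^ 2 ->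
  (m - 2) ^ 2 < 4 * (n - 2) ->
  exists b p, [/\ 3 <= b, b <= n, n <= b + p * (b - 2) & b + p = m].
Proof.
move=> m_ge3 ub lb; set h := (m - 1)./2.
have := odd_double_half (m - 1); rewrite -/h -muln2 => halves.
exists h.+2, (m - h.+2); rewrite !subSS subn0.
by case: (odd (m - 1)) halves => /= halves; split; nia.
Qed.

Theorem proposition3p6 (n : nat) :
  3 <= n ->
  forall m : nat, is_ceil_nat (cycle_bound n) m -> thH (cycle_adj n) m.
Proof.
move=> n_ge3 m ceil_m; have [m_ge3 ub lb] := ceil_cycle_bound n_ge3 ceil_m.
apply: thH_of_bounds.
  move=> B F t forces full; apply: (leq_budget_of_cover n_ge3 lb).
  rewrite -[n in n <= _]card_ord -cardsT -full.
  exact/card_Uset_cycle/set_of_forces_functional/forces.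
have [b [p [b_ge3 b_le covers <-]]] := exists_tight_cover m_ge3 ub lb.
have [B [F [forces full cardB]]] := cycle_shift_forcing b_ge3 b_le covers.
by exists B, F, p; rewrite cardB.
Qed.
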